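(* Let $K$ be a field, $\vartheta$ any one of the four types (left, right, pre-two-sided, two-sided), and $\mathcal A$ a $K$-algebra. Then $\mathcal A$ is $\vartheta$-quasi-stable if and only if either $\mathcal A\simeq K\times K$ (product algebra with componentwise operations) or $\mathcal A$ is a local $K$-algebra which is algebraic over $K$.
   Context: Algebras are associative, unital and nonzero. A local algebra is one with a unique maximal left ideal. $\mathcal A$ is algebraic over $K$ if every element is a root of a nonzero polynomial over $K$. A $K$-subspace $V$ of $\mathcal A$ is a left (resp. right) Mathieu subspace if whenever $a^m\in V$ for all $m\ge1$, then for every $b\in\mathcal A$, $ba^m\in V$ (resp. $a^mb\in V$) for all sufficiently large $m$; pre-two-sided if both left and right; two-sided if whenever $a^m\in V$ for all $m\ge1$, for all $b,c\in\mathcal A$, $ba^mc\in V$ for all sufficiently large $m$. $\mathcal A$ is $\vartheta$-quasi-stable if every $K$-subspace $V$ with $1\notin V$ is a $\vartheta$-Mathieu subspace of $\mathcal A$. *)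

From mathcomp Require Import all_boot all_algebra.
Set Implicit Arguments. Unset Strict Implicit. Unset Printing Implicit Defensive.
Import GRing.Theory.
Local Open Scope ring_scope.

Inductive mathieu_kind : Type := MLeft | MRight | MPreTwoSided | MTwoSided.

Section Defs.
Variables (K : fieldType) (A : algType K).

Definition is_subspace (V : A -> Prop) : Prop :=
  V 0 /\ (forall u v, V u -> V v -> V (u + v)) /\
  (forall (k : K) u, V u -> V (k *: u)).

Definition all_pows_in (V : A -> Prop) (a : A) : Prop :=
  forall m : nat, (1 <= m)%N -> V (a ^+ m).

Definition left_mathieu (V : A -> Prop) : Prop :=
  forall a, all_pows_in V a ->
  forall b, exists N : nat, forall m : nat, (N <= m)%N -> V (b * a ^+ m).

Definition right_mathieu (V : A -> Prop) : Prop :=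
  forall a, all_pows_in V a ->
  forall b, exists N : nat, forall m : nat, (N <= m)%N -> V (a ^+ m * b).

Definition pre_two_sided_mathieu (V : A -> Prop) : Prop :=
  left_mathieu V /\ right_mathieu V.

Definition two_sided_mathieu (V : A -> Prop) : Prop :=
  forall a, all_pows_in V a ->
  forall b c, exists N : nat, forall m : nat, (N <= m)%N -> V (b * a ^+ m * c).

Definition mathieu (th : mathieu_kind) (V : A -> Prop) : Prop :=
  match th with
  | MLeft => left_mathieu V
  | MRight => right_mathieu V
  | MPreTwoSided => pre_two_sided_mathieu V
  | MTwoSided => two_sided_mathieu V
  end.

Definition quasi_stable (th : mathieu_kind) : Prop :=
  forall V : A -> Prop, is_subspace V -> ~ V 1 -> mathieu th V.

Definition is_left_ideal (I : A -> Prop) : Prop :=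
  I 0 /\ (forall x y, I x -> I y -> I (x + y)) /\ (forall b x, I x -> I (b * x)).

Definition is_maximal_left_ideal (I : A -> Prop) : Prop :=
  is_left_ideal I /\ ~ I 1 /\
  (forall J : A -> Prop, is_left_ideal J -> ~ J 1 ->
     (forall x, I x -> J x) -> forall x, J x -> I x).

Definition is_local_algebra : Prop :=
  exists I : A -> Prop, is_maximal_left_ideal I /\
    forall J : A -> Prop, is_maximal_left_ideal J -> forall x, J x <-> I x.

Definition is_algebraic : Prop :=
  forall a : A, exists p : {poly K}, p != 0 /\ horner_alg a p = 0.

Definition iso_KxK : Prop :=
  exists f : {lrmorphism A -> (K^o * K^o)%type}, bijective f.

End Defs.

(* Every algebraic element a has a Fitting idempotent e = a g(a), i.e. one
   with a^m (1 - e) = 0 for some m. Quasi-stability, applied to V = K e, forces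
   A e = K e (or e A = K e) for every nontrivial idempotent e, and then
   A = K e + K (1 - e) is K x K; applied to the even polynomials without
   constant term in a transcendental a, with b = a, it forces algebraicity.
   Without nontrivial idempotents every Fitting idempotent is 0 or 1, so every
   element is nilpotent or invertible and the nilpotent elements form the
   unique maximal left ideal. Conversely, in a local algebraic algebra an
   element whose powers lie in V has its Fitting idempotent in V, hence 0, and
   is nilpotent. In K x K an element a with no zero coordinate satisfies
   a^2 - tr(a) a + det(a) = 0, putting 1 in V; otherwise b a^m c is a multiple
   of a^m. *)

From HB Require Import structures.
From mathcomp Require Import all_boot all_algebra ring.
From mathcomp Require Import boolp classical_sets.
Set Implicit Arguments. Unset Strict Implicit. Unset Printing Implicit Defensive.
Import GRing.Theory.
Local Open Scope ring_scope.

(* [p = 'X^m q] with [q(0) = c != 0]; then [s := 1 - q / c] vanishes at 0, say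
   [s = 'X r], and [1 - s^(m+1)] is a multiple of [1 - s = q / c]. *)
Lemma fitting_poly (K : fieldType) (p : {poly K}) : p != 0 ->
  exists (m : nat) (r : {poly K}), p %| 'X^m * (1 - ('X * r) ^+ m.+1).
Proof.
move=> p_neq0; have [m [q q0 Dp]] := multiplicity_XsubC p 0.
rewrite p_neq0 /= in q0; rewrite polyC0 subr0 in Dp.
set c := q.[0]; have c_neq0 : c != 0 by [].
have /factor_theorem[r Ds] : root (1 - c^-1 *: q) 0.
  by rewrite /root hornerD hornerN hornerZ hornerC mulVf // subrr.
rewrite polyC0 subr0 in Ds.
exists m, r; apply/dvdpP.
exists (c^-1%:P * \sum_(i < m.+1) (1 - c^-1 *: q) ^+ i).
by rewrite [_ * r]mulrC -Ds -opprB subrX1 -mul_polyC Dp; ring.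
Qed.

Section AlgebraicElements.
Variables (K : fieldType) (A : algType K).
Implicit Types (a e : A) (V : A -> Prop).

Definition algebraic a := exists p : {poly K}, p != 0 /\ horner_alg a p = 0.
Definition nilpotent a := exists n, a ^+ n = 0.
Definition left_invertible a := exists w, w * a = 1.
Definition idempotents_trivial := forall e, e * e = e -> e = 0 \/ e = 1.

Lemma idempotent_expS e n : e * e = e -> e ^+ n.+1 = e.
Proof. by move=> e_idem; elim: n => [|n IH]; rewrite ?expr1 // exprS IH. Qed.

Lemma idempotent_1B e : e * e = e -> (1 - e) * (1 - e) = 1 - e.
Proof. by move=> e_idem; rewrite mulrBr mulr1 mulrBl mul1r e_idem subrr subr0. Qed.

Lemma idempotent_left_invertible e : e * e = e -> left_invertible e -> e = 1.
Proof. by move=> e_idem [w we1]; rewrite -we1 -{2}e_idem mulrA we1 mul1r. Qed.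

Lemma horner_alg_comm a (g : {poly K}) : a * horner_alg a g = horner_alg a g * a.
Proof. by rewrite -{1 4}(horner_algX a) -!rmorphM mulrC. Qed.

Lemma fitting_idempotent a : algebraic a ->
  exists (m : nat) (g : {poly K}),
    let e := a * horner_alg a g in e * e = e /\ a ^+ m * (1 - e) = 0.
Proof.
move=> [p [p_neq0 pa0]]; have [m [r p_dvd]] := fitting_poly p_neq0.
have eval0 q : p %| q -> horner_alg a q = 0.
  by case/dvdpP=> s ->; rewrite rmorphM /= pa0 mulr0.
pose E := ('X * r) ^+ m.+1.
exists m, ('X^m * r ^+ m.+1) => /=.
have -> : a * horner_alg a ('X^m * r ^+ m.+1) = horner_alg a E.
  by rewrite /E exprMn (exprS 'X) -mulrA [in RHS]rmorphM /= horner_algX.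
split; last first.
  by have := eval0 _ p_dvd; rewrite rmorphM rmorphB rmorph1 rmorphXn /= horner_algX.
have : horner_alg a (E * (1 - E)) = 0.
  have E_eq : E = 'X * r ^+ m.+1 * 'X^m by rewrite /E exprMn (exprSr 'X); ring.
  by apply: eval0; rewrite {1}E_eq -mulrA dvdp_mull.
by rewrite rmorphM rmorphB rmorph1 mulrBr mulr1 => /eqP; rewrite subr_eq0 => /eqP <-.
Qed.

Lemma nilpotent_or_left_invertible a :
  algebraic a -> idempotents_trivial -> nilpotent a \/ left_invertible a.
Proof.
move=> alg_a triv; have [m [g /= [e_idem am_e]]] := fitting_idempotent alg_a.
have [e0|e1] := triv _ e_idem.
  by left; exists m; move: am_e; rewrite e0 subr0 mulr1.
by right; exists (horner_alg a g); rewrite -horner_alg_comm.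
Qed.

Lemma subspace_mul_horner V a (g : {poly K}) :
  is_subspace V -> all_pows_in V a -> V (a * horner_alg a g).
Proof.
move=> [V0 [VD VZ]] Va.
rewrite -[a in a * _](horner_algX a) -rmorphM -[_ * g]coefK poly_def rmorph_sum.
apply: (big_ind V) => // -[[|i] _] _ /=; first by rewrite coefXM /= scale0r rmorph0.
by rewrite linearZ /= mulr_algl rmorphXn /= horner_algX; apply: VZ; apply: Va.
Qed.

Lemma nilpotent_of_pows_in_subspace V a :
  is_subspace V -> ~ V 1 -> all_pows_in V a ->
  algebraic a -> idempotents_trivial -> nilpotent a.
Proof.
move=> sV nV1 Va alg_a triv.
have [m [g /= [e_idem am_e]]] := fitting_idempotent alg_a.
have [e0|e1] := triv _ e_idem.
  by exists m; move: am_e; rewrite e0 subr0 mulr1.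
by case: nV1; rewrite -e1; apply: subspace_mul_horner.
Qed.

(* A transcendental [a] spans a polynomial ring, in which the even polynomials
   without constant term form a subspace containing the powers of [a ^+ 2] but
   no odd power of [a]. *)
Lemma algebraic_of_odd_pows a :
  (forall V, is_subspace V -> ~ V 1 -> all_pows_in V (a ^+ 2) ->
     exists m, V (a ^+ m.*2.+1)) -> algebraic a.
Proof.
move=> odd_in; apply: contrapT => transc.
have inj0 p : horner_alg a p = 0 -> p = 0.
  move=> pa0; apply/eqP; apply: contrapT => p_neq0.
  by apply: transc; exists p; split=> //; apply/negP.
have hornerXn n : horner_alg a 'X^n = a ^+ n by rewrite rmorphXn /= horner_algX.
pose V x := exists2 r : {poly K}, x = horner_alg a r &
  forall i, (i == 0)%N || odd i -> r`_i = 0.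
have sV : is_subspace V.
  split; first by exists 0 => [|i _]; rewrite ?rmorph0 ?coef0.
  split=> [_ _ [r -> r0] [s -> s0]|k _ [r -> r0]].
    by exists (r + s) => [|i i0]; rewrite ?rmorphD // coefD r0 ?s0 ?addr0.
  by exists (k *: r) => [|i i0]; rewrite ?linearZ /= ?mulr_algl // coefZ r0 ?mulr0.
have nV1 : ~ V 1.
  move=> [r r1 r0]; have r_eq1 : r = 1.
    by apply/eqP; rewrite -subr_eq0; apply/eqP/inj0; rewrite rmorphB /= rmorph1 -r1 subrr.
  by move: (r0 0%N isT); rewrite r_eq1 coef1 => /eqP; rewrite oner_eq0.
have Va : all_pows_in V (a ^+ 2).
  move=> [//|m] _; exists 'X^(2 * m.+1) => [|i]; first by rewrite hornerXn exprM.
  by rewrite coefXn; case: (eqVneq i (2 * m.+1)) => [->|]; rewrite ?oddM.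
have [m [r r_eq r0]] := odd_in V sV nV1 Va.
have r_eq' : r = 'X^(m.*2.+1).
  apply/eqP; rewrite -subr_eq0; apply/eqP/inj0.
  by rewrite rmorphB /= hornerXn -r_eq subrr.
move: (r0 m.*2.+1); rewrite r_eq' coefXn eqxx.
by rewrite /= odd_double /= => /(_ isT) /eqP; rewrite oner_eq0.
Qed.
End AlgebraicElements.

Section LocalAlgebras.
Variables (K : fieldType) (A : algType K).
Implicit Types (a x : A) (I J : A -> Prop).
Local Open Scope classical_set_scope.

Lemma nilpotent_not_left_invertible x : nilpotent x -> ~ left_invertible x.
Proof.
move=> [n xn0] [w wx1].
have wxn k : w ^+ k * x ^+ k = 1.
  elim: k => [|k IH]; first by rewrite !expr0 mulr1.
  by rewrite exprSr exprS -mulrA [w * _]mulrA wx1 mul1r.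
by move/eqP: (wxn n); rewrite xn0 mulr0 eq_sym oner_eq0.
Qed.

Lemma left_invertible_1B_nilpotent x : nilpotent x -> left_invertible (1 - x).
Proof.
move=> [n xn0]; exists (\sum_(i < n) x ^+ i).
have cx : GRing.comm (1 - x) (\sum_(i < n) x ^+ i).
  apply: commr_sum => i _; apply/commrX/commr_sym/commrB.
    exact: commr1.
  exact: commr_refl.
by rewrite -cx -opprB mulNr -subrX1 xn0 sub0r opprK.
Qed.

Lemma left_ideal_sub_maximal I : is_left_ideal I -> ~ I 1 ->
  exists2 M, is_maximal_left_ideal M & I `<=` M.
Proof.
move=> idI nI1.
(* [Zorn_bigcup] also applies to the empty chain, whence the guard [B !=set0]. *)
pose P (B : set A) := B !=set0 -> [/\ is_left_ideal B, ~ B 1 & I `<=` B].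
have [|B [PB Bmax]] := @Zorn_bigcup A P.
  move=> F FP Ftot [y [C0 FC0 C0y]].
  have [[C00 [_ _]] _ IC0] := FP C0 FC0 (ex_intro _ y C0y).
  have idF C : F C -> C !=set0 -> is_left_ideal C by move=> /FP PC /PC[].
  split; last first.
  - by move=> z Iz; exists C0 => //; exact: IC0.
  - by move=> [C FC C1]; have [_ ] := FP C FC (ex_intro _ 1 C1).
  split; first by exists C0.
  split=> [u v [Cu FCu uCu] [Cv FCv vCv]|b u [C FC uC]].
    have [/(_ u uCu) uCv|/(_ v vCv) vCu] := Ftot _ _ FCu FCv.
      by exists Cv => //; have [_ [+ _]] := idF _ FCv (ex_intro _ v vCv); apply.
    by exists Cu => //; have [_ [+ _]] := idF _ FCu (ex_intro _ u uCu); apply.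
  by exists C => //; have [_ [_ +]] := idF _ FC (ex_intro _ u uC); apply.
have /set0P B_neq0 : B != set0.
  apply/eqP => B0; apply: (Bmax I); last by move=> _; split.
  rewrite B0; split; first exact: sub0set.
  by move/(_ 0); apply; case: idI.
have [idB nB1 IB] := PB B_neq0.
exists B => //; split=> //; split=> // J idJ nJ1 BJ x Jx; apply: contrapT => nBx.
apply: (Bmax J); first by split=> // /(_ x Jx).
by move=> _; split=> // z /IB /BJ.
Qed.

Lemma not_left_invertible_sub_maximal x : ~ left_invertible x ->
  exists2 M, is_maximal_left_ideal M & M x.
Proof.
move=> x_ninv; pose I y := exists b, y = b * x.
have idI : is_left_ideal I.
  split; first by exists 0; rewrite mul0r.
  split=> [_ _ [u ->] [v ->]|b _ [u ->]]; first by exists (u + v); rewrite mulrDl.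
  by exists (b * u); rewrite mulrA.
have nI1 : ~ I 1 by move=> [b b1]; apply: x_ninv; exists b.
have [M maxM IM] := left_ideal_sub_maximal idI nI1.
by exists M => //; apply: IM; exists 1; rewrite mul1r.
Qed.

Lemma local_idempotents_trivial : is_local_algebra A -> idempotents_trivial A.
Proof.
move=> [M [[[_ [MD _]] [nM1 _]] Muniq]] e e_idem.
have inM x : ~ left_invertible x -> M x.
  by move=> /not_left_invertible_sub_maximal[J maxJ Jx]; apply/(Muniq J maxJ).
have [e_inv|e_ninv] := pselect (left_invertible e).
  by right; exact: idempotent_left_invertible.
have [f_inv|f_ninv] := pselect (left_invertible (1 - e)).
  have f1 := idempotent_left_invertible (idempotent_1B e_idem) f_inv.
  by left; rewrite -(subKr 1 e) f1 subrr.
by case: nM1; rewrite -(subrK e 1) addrC; apply: MD; apply: inM.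
Qed.

Lemma local_of_nilpotent_or_left_invertible :
  (forall a, nilpotent a \/ left_invertible a) -> is_local_algebra A.
Proof.
move=> nil_or_inv.
have nil_mull (b y : A) : nilpotent y -> nilpotent (b * y).
  move=> y_nil; have [//|[w wby]] := nil_or_inv (b * y).
  by case: (nilpotent_not_left_invertible y_nil); exists (w * b); rewrite -mulrA.
have nil_add (u v : A) : nilpotent u -> nilpotent v -> nilpotent (u + v).
  move=> u_nil v_nil; have [//|[w wuv]] := nil_or_inv (u + v).
  have [z zwu] := left_invertible_1B_nilpotent (nil_mull w _ u_nil).
  have wv : w * v = 1 - w * u by rewrite -wuv mulrDr addrAC subrr add0r.
  by case: (nilpotent_not_left_invertible v_nil); exists (z * w); rewrite -mulrA wv.
have sub_nil J : is_left_ideal J -> ~ J 1 -> forall y, J y -> nilpotent y.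
  move=> [_ [_ JM]] nJ1 y Jy; have [//|[w wy1]] := nil_or_inv y.
  by case: nJ1; rewrite -wy1; apply: JM.
have idN : is_left_ideal (@nilpotent _ A).
  split; first by exists 1%N; rewrite expr1.
  by split=> [u v|b u]; [apply: nil_add|apply: nil_mull].
have nN1 : ~ nilpotent (1 : A) by move=> [n]; rewrite expr1n => /eqP; rewrite oner_eq0.
exists (@nilpotent _ A); split.
  by split=> //; split=> // J idJ nJ1 _; apply: sub_nil.
move=> J [idJ [nJ1 maxJ]] y; split; first exact: sub_nil.
exact: (maxJ _ idN nN1 (sub_nil J idJ nJ1)).
Qed.
End LocalAlgebras.

Section ProductAlgebra.
Variable K : fieldType.
Implicit Types (u v w : K^o * K^o).

Lemma pairX (x y : K^o) m : (x, y) ^+ m = (x ^+ m, y ^+ m).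
Proof. by elim: m => // m IH; rewrite !exprS IH. Qed.

Lemma KxK_quadratic u : u * u = (u.1 + u.2) *: u - (u.1 * u.2) *: 1.
Proof. by case: u => x y; congr (_, _) => /=; rewrite /GRing.scale /=; ring. Qed.

Lemma KxK_pow_absorb u v w m : u.1 * u.2 = 0 -> (0 < m)%N ->
  exists k : K, v * u ^+ m * w = k *: u ^+ m.
Proof.
case: u v w m => x y [v1 v2] [w1 w2] [//|m] /= /eqP.
rewrite mulf_eq0 pairX => /orP[]/eqP-> _.
  by exists (v2 * w2); congr (_, _) => /=; rewrite /GRing.scale /= ?expr0n /=; ring.
by exists (v1 * w1); congr (_, _) => /=; rewrite /GRing.scale /= ?expr0n /=; ring.
Qed.
End ProductAlgebra.

Section SplitAlgebras.
Variables (K : fieldType) (A : algType K).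
Implicit Types (e f x : A).

Definition nontrivial_idempotent e := [/\ e * e = e, e != 0 & e != 1].

Lemma nontrivial_idempotent_1B e :
  nontrivial_idempotent e -> nontrivial_idempotent (1 - e).
Proof.
case=> e_idem e_neq0 e_neq1; split; first exact: idempotent_1B.
  by rewrite subr_eq0 eq_sym.
by rewrite -subr_eq0 addrAC subrr add0r oppr_eq0.
Qed.

(* The junk value [0] is returned when [x * f] is not a multiple of [f]. *)
Definition idem_coord f x : K := xget 0 (fun k => x * f = k *: f).

Lemma idem_coordP f x : (exists k, x * f = k *: f) -> x * f = idem_coord f x *: f.
Proof. exact: xgetPex. Qed.

Lemma idem_coord_eq f x k : f != 0 -> x * f = k *: f -> idem_coord f x = k.
Proof.
move=> f_neq0 xfk; apply: xget_unique => // l xfl; apply/eqP.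
have : (l - k) *: f == 0 by rewrite scalerBl -xfl -xfk subrr.
by rewrite scaler_eq0 (negbTE f_neq0) orbF subr_eq0.
Qed.

Section Coordinates.
Variables (e : A) (e_nt : nontrivial_idempotent e).
Hypothesis absorb :
  forall f, nontrivial_idempotent f -> forall x, exists k, x * f = k *: f.

Definition split_coords x : K^o * K^o := (idem_coord e x, idem_coord (1 - e) x).

Let f_nt := nontrivial_idempotent_1B e_nt.

Lemma split_coords1 x : x * e = (split_coords x).1 *: e.
Proof. exact/idem_coordP/absorb. Qed.

Lemma split_coords2 x : x * (1 - e) = (split_coords x).2 *: (1 - e).
Proof. exact/idem_coordP/absorb. Qed.

Lemma split_coords_eq x k l :
  x * e = k *: e -> x * (1 - e) = l *: (1 - e) -> split_coords x = (k, l).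
Proof.
case: e_nt f_nt => _ e_neq0 _ [_ f_neq0 _] xe xf.
by rewrite /split_coords (idem_coord_eq e_neq0 xe) (idem_coord_eq f_neq0 xf).
Qed.

Lemma split_coordsK x : x = (split_coords x).1 *: e + (split_coords x).2 *: (1 - e).
Proof. by rewrite -split_coords1 -split_coords2 -mulrDr addrC subrK mulr1. Qed.

Lemma split_coords_comb (u : K^o * K^o) : split_coords (u.1 *: e + u.2 *: (1 - e)) = u.
Proof.
case: e_nt => e_idem _ _; have ef0 : e * (1 - e) = 0 by rewrite mulrBr mulr1 e_idem subrr.
have fe0 : (1 - e) * e = 0 by rewrite mulrBl mul1r e_idem subrr.
case: u => k l; apply: split_coords_eq; rewrite mulrDl -!scalerAl.
  by rewrite e_idem fe0 scaler0 addr0.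
by rewrite ef0 idempotent_1B // scaler0 add0r.
Qed.

Lemma split_coords_linear : linear split_coords.
Proof.
move=> k x y; apply: split_coords_eq; rewrite mulrDl -scalerAl.
  by rewrite !split_coords1 scalerA scalerDl.
by rewrite !split_coords2 scalerA scalerDl.
Qed.

Lemma split_coords_monoid_morphism : monoid_morphism split_coords.
Proof.
split; first by apply: split_coords_eq; rewrite mul1r scale1r.
move=> x y; apply: split_coords_eq; rewrite -mulrA.
  by rewrite split_coords1 -scalerAr split_coords1 scalerA mulrC.
by rewrite split_coords2 -scalerAr split_coords2 scalerA mulrC.
Qed.

HB.instance Definition _ :=
  GRing.isLinear.Build K A (K^o * K^o)%type *:%R split_coords split_coords_linear.
HB.instance Definition _ :=
  GRing.isMonoidMorphism.Build A (K^o * K^o)%type split_coords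
    split_coords_monoid_morphism.

Lemma iso_KxK_of_absorbing_idempotent : iso_KxK A.
Proof.
exists split_coords; exists (fun u : K^o * K^o => u.1 *: e + u.2 *: (1 - e)).
  by move=> x; rewrite -split_coordsK.
exact: split_coords_comb.
Qed.
End Coordinates.

Lemma iso_KxK_two_sided_mathieu (V : A -> Prop) :
  iso_KxK A -> is_subspace V -> ~ V 1 -> two_sided_mathieu V.
Proof.
move=> [f [g fK _]] [V0 [VD VZ]] nV1 a Va b c; have f_inj := can_inj fK.
have [det0|det_neq0] := eqVneq ((f a).1 * (f a).2) 0.
  exists 1%N => m m_gt0; have [k fbc] := KxK_pow_absorb (f b) (f c) det0 m_gt0.
  have -> : b * a ^+ m * c = k *: a ^+ m.
    by apply: f_inj; rewrite linearZ !rmorphM !rmorphXn fbc.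
  by apply: VZ; apply: Va.
have quad : a * a = ((f a).1 + (f a).2) *: a - ((f a).1 * (f a).2) *: 1.
  by apply: f_inj; rewrite rmorphM KxK_quadratic linearB !linearZ rmorph1.
have det_one : (f a).1 * (f a).2 *: 1 = ((f a).1 + (f a).2) *: a - a * a.
  by rewrite quad subKr.
case: nV1; rewrite -(scalerK det_neq0 1) det_one.
apply/VZ/VD; first by apply: VZ; rewrite -[a]expr1; apply: Va.
by rewrite -scaleN1r -expr2; apply: VZ; apply: Va.
Qed.
End SplitAlgebras.

Section QuasiStability.
Variables (K : fieldType) (A : algType K).
Implicit Types (a e x : A) (V : A -> Prop).

Lemma two_sided_left_mathieu V : two_sided_mathieu V -> left_mathieu V.
Proof.
by move=> tsV a Va b; have [N HN] := tsV a Va b 1; exists N => m /HN; rewrite mulr1.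
Qed.

Lemma two_sided_right_mathieu V : two_sided_mathieu V -> right_mathieu V.
Proof.
by move=> tsV a Va b; have [N HN] := tsV a Va 1 b; exists N => m /HN; rewrite mul1r.
Qed.

Lemma mathieu_of_two_sided th V : two_sided_mathieu V -> mathieu th V.
Proof.
case: th => tsV //=; first exact: two_sided_left_mathieu.
  exact: two_sided_right_mathieu.
by split; [exact: two_sided_left_mathieu|exact: two_sided_right_mathieu].
Qed.

Lemma two_sided_mathieu_of_nilpotent V : is_subspace V ->
  (forall a, all_pows_in V a -> nilpotent a) -> two_sided_mathieu V.
Proof.
move=> [V0 _] pows_nil a /pows_nil[n an0] b c; exists n => m /subnK <-.
by rewrite exprD an0 mulr0 mulr0 mul0r.
Qed.

Lemma quasi_stable_left_or_right th :
  quasi_stable A th -> quasi_stable A MLeft \/ quasi_stable A MRight.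
Proof.
case: th => qs; [by left|by right| |].
  by left => V sV nV1; have [] := qs V sV nV1.
by left => V sV nV1; apply/two_sided_left_mathieu/qs.
Qed.

Lemma algebraic_of_quasi_stable th : quasi_stable A th -> is_algebraic A.
Proof.
move=> /quasi_stable_left_or_right qs a; apply: algebraic_of_odd_pows => V sV nV1 Va.
case: qs => qs; have [N HN] := qs V sV nV1 _ Va a; exists N; rewrite -mul2n.
  by rewrite exprS exprM; exact: HN.
by rewrite exprSr exprM; exact: HN.
Qed.

Definition span1 e x := exists k : K, x = k *: e.

Lemma span1_nontrivial_idempotent e : nontrivial_idempotent e ->
  [/\ is_subspace (span1 e), ~ span1 e 1 & all_pows_in (span1 e) e].
Proof.
case=> e_idem _ e_neq1; split.
- split; first by exists 0; rewrite scale0r.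
  split=> [_ _ [k ->] [l ->]|c _ [k ->]]; first by exists (k + l); rewrite scalerDl.
  by exists (c * k); rewrite scalerA.
- move=> [k k1]; move/eqP: e_neq1; apply.
  by rewrite -[e]mulr1 k1 -scalerAr e_idem -k1.
- by move=> [|m] // _; exists 1; rewrite scale1r idempotent_expS.
Qed.

Lemma left_absorb_of_right_absorb :
  (forall f, nontrivial_idempotent f -> forall x, exists k : K, f * x = k *: f) ->
  forall e, nontrivial_idempotent e -> forall x, exists k : K, x * e = k *: e.
Proof.
move=> absorb e e_nt x; have [e_idem _ _] := e_nt.
have [k ex] := absorb e e_nt x.
have [l fx] := absorb _ (nontrivial_idempotent_1B e_nt) x.
exists k; rewrite -[x]mul1r -(subrK e 1) mulrDl fx ex mulrDl -!scalerAl e_idem.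
by rewrite mulrBl mul1r e_idem subrr scaler0 add0r.
Qed.

Lemma absorb_of_quasi_stable th : quasi_stable A th ->
  forall e, nontrivial_idempotent e -> forall x, exists k : K, x * e = k *: e.
Proof.
move=> /quasi_stable_left_or_right[] qs; last apply: left_absorb_of_right_absorb;
  move=> e e_nt x; have [sL nL1 Le] := span1_nontrivial_idempotent e_nt;
  have [N HN] := qs _ sL nL1 e Le x; have [e_idem _ _] := e_nt;
  by have := HN N.+1 (leqnSn N); rewrite idempotent_expS.
Qed.

Lemma idempotents_trivial_or_nontrivial :
  idempotents_trivial A \/ exists e, nontrivial_idempotent e.
Proof.
have [[e e_nt]|none] := pselect (exists e, nontrivial_idempotent e).
  by right; exists e.
left => e e_idem; have [|e_neq0] := eqVneq e 0; first by left.
have [|e_neq1] := eqVneq e 1; first by right.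
by case: none; exists e.
Qed.
End QuasiStability.

Theorem theorem7p6 (K : fieldType) (th : mathieu_kind) (A : algType K) :
  quasi_stable A th <-> (iso_KxK A \/ (is_local_algebra A /\ is_algebraic A)).
Proof.
split=> [qs | [iso | [loc alg]] V sV nV1]; last 2 first.
- exact/mathieu_of_two_sided/iso_KxK_two_sided_mathieu.
- apply/mathieu_of_two_sided/two_sided_mathieu_of_nilpotent => // a Va.
  exact: nilpotent_of_pows_in_subspace sV nV1 Va (alg a) (local_idempotents_trivial loc).
have alg := algebraic_of_quasi_stable qs.
have [triv|[e e_nt]] := idempotents_trivial_or_nontrivial A.
  right; split=> //; apply: local_of_nilpotent_or_left_invertible => a.
  exact: nilpotent_or_left_invertible (alg a) triv.
by left; apply: iso_KxK_of_absorbing_idempotent e_nt (absorb_of_quasi_stable qs).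
Qed.
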